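(* Let $n\geq 2$ and let $C$ be an all-ones CRC in $G_n$ with covering radius $\rho\geq 1$, $c_1=1$, $\mathbf{0}\in C$ and $-e_n\in C$. Then for any two distinct slice pairs $A,B\subseteq C$ lying in the same $s$-slice, $d(x,y)\geq 4$ for all $x\in A$, $y\in B$.
   Context: $G_n$: vertex set $\mathbb{Z}^n$, $x\sim y$ iff $\sum_i|x_i-y_i|=1$, $d$ its distance; $e_i$ the $i$-th unit vector. For a code $C$ with covering radius $\rho$, $C_i=\{v:d(v,C)=i\}$. $C$ is a CRC if for all $i,j$ every vertex of $C_i$ has the same number $\alpha_{ij}$ of neighbours in $C_j$, with $\alpha_{ij}=0$ for $|i-j|>1$; $a_i=\alpha_{ii}$, $c_i=\alpha_{i,i-1}$. $C$ is all-ones if $a_i=1$ for all $i$. For $s\in\mathbb{Z}$, the $s$-slice is $\{x: x_n\in\{2s,2s-1\}\}$; a slice pair is $\{x,x-e_n\}$ with $x_n=2s$ for some $s$. *)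

From HB Require Import structures.
From mathcomp Require Import all_boot all_order all_algebra.
From mathcomp Require Import boolp.
Set Implicit Arguments. Unset Strict Implicit. Unset Printing Implicit Defensive.
Import Order.TTheory GRing.Theory Num.Theory.
Local Open Scope ring_scope.

(* Vertices of G_n: integer vectors indexed by 'I_n (coordinates 0..n-1). *)
Definition vtx (n : nat) := {ffun 'I_n -> int}.

Definition evec (n : nat) (k : 'I_n) : vtx n := [ffun j => ((j == k) : nat)%:Z].

(* e_n of the paper = unit vector along the last coordinate (index n-1) *)
Definition elast (n : nat) : vtx n := [ffun j : 'I_n => ((val j == n.-1)%N : nat)%:Z].

Definition xlast (n : nat) (x : vtx n) : int := \sum_(j < n | val j == n.-1) x j.

(* graph distance of G_n (the L1 distance) *)
Definition dist (n : nat) (x y : vtx n) : nat := (\sum_(i < n) `|x i - y i|)%N.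

(* the 2n neighbours of v: v + e_k (b = true) and v - e_k (b = false) *)
Definition nbr (n : nat) (v : vtx n) (p : 'I_n * bool) : vtx n :=
  v + (if p.2 then evec p.1 else - evec p.1).

Definition dist_to (n : nat) (C : vtx n -> Prop) (v : vtx n) (i : nat) : Prop :=
  (exists2 c, C c & dist v c = i) /\ (forall c, C c -> (i <= dist v c)%N).

Definition covering_radius (n : nat) (C : vtx n -> Prop) (rho : nat) : Prop :=
  (forall v, exists2 c, C c & (dist v c <= rho)%N) /\ (exists v, dist_to C v rho).

Definition nb_count (n : nat) (C : vtx n -> Prop) (j : nat) (v : vtx n) : nat :=
  #|[set p : 'I_n * bool | `[< dist_to C (nbr v p) j >]]|.

Definition is_CRC (n : nat) (C : vtx n -> Prop) (alpha : nat -> nat -> nat) : Prop :=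
  (forall (i j : nat) (v : vtx n), dist_to C v i -> nb_count C j v = alpha i j) /\
  (forall i j : nat, (j.+1 < i)%N \/ (i.+1 < j)%N -> alpha i j = 0%N).

(** Since a_0 = 1, the only neighbour of a codeword x in C is its slice partner
    x - e_n.  Suppose two codewords x <> y with the same last coordinate were at
    distance at most 3, and walk from x towards y without touching the last
    coordinate: x ~ u ~ w (~ y).  Because c_1 = 1, the vertex u lies in C_1 and
    its single C-neighbour is x, which forces d(x, y) = 3 and w in C_1.  The
    vertex z = u - e_n is also in C_1, being adjacent to x - e_n, so u has the
    two distinct neighbours w and z in C_1, contradicting a_1 = 1.  For the
    slice partners, moving along e_n only increases the distance. *)
From mathcomp Require Import all_boot all_order all_algebra.
From mathcomp Require Import boolp zify.
Import Order.TTheory GRing.Theory Num.Theory.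
Set Implicit Arguments. Unset Strict Implicit. Unset Printing Implicit Defensive.
Local Open Scope ring_scope.

Section Grid.

Variable n : nat.
Implicit Types (x y v : vtx n) (p q : 'I_n * bool).

Lemma nbrE v p j :
  nbr v p j = v j + (if p.2 then ((j == p.1) : nat)%:Z else - ((j == p.1) : nat)%:Z).
Proof. by rewrite /nbr; case: p.2; rewrite !ffunE. Qed.

Lemma nbr_other v p j : j != p.1 -> nbr v p j = v j.
Proof. by move=> /negbTE jp; rewrite nbrE jp; case: p.2; lia. Qed.

Lemma nbr_moved v p : nbr v p p.1 != v p.1.
Proof. by rewrite nbrE eqxx; case: p.2; lia. Qed.

Lemma nbrK v p : nbr (nbr v p) (p.1, ~~ p.2) = v.
Proof. by apply/ffunP => j; rewrite !nbrE /=; case: p.2 => /=; lia. Qed.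

Lemma nbrC v p q : nbr (nbr v p) q = nbr (nbr v q) p.
Proof. by apply/ffunP => j; rewrite !nbrE; case: p.2; case: q.2; lia. Qed.

Lemma dist_sym x y : dist x y = dist y x.
Proof. by apply: eq_bigr => i _; lia. Qed.

Lemma distxx x : dist x x = 0%N.
Proof. by rewrite /dist big1 // => i _; rewrite subrr. Qed.

Lemma dist_eq0 x y : dist x y = 0%N -> x = y.
Proof.
move=> /eqP; rewrite /dist sum_nat_eq0 => /forallP x_y.
by apply/ffunP => i; move: (x_y i); rewrite absz_eq0 subr_eq0 => /eqP.
Qed.

Lemma dist_addr x y v : dist (x + v) (y + v) = dist x y.
Proof. by apply: eq_bigr => i _; rewrite !ffunE opprD addrACA subrr addr0. Qed.

Lemma dist_nbr v p : dist v (nbr v p) = 1%N.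
Proof.
rewrite /dist (bigD1 p.1) //= big1 => [|j jp]; last by rewrite nbr_other // subrr.
by rewrite nbrE eqxx; case: p.2; lia.
Qed.

Lemma dist_nbr_agree x y p : x p.1 = y p.1 -> dist x (nbr y p) = (dist x y).+1.
Proof.
move=> xy_p; rewrite /dist (bigD1 p.1) //= [in RHS](bigD1 p.1) //=.
rewrite -addSn; congr (_ + _)%N; last by apply: eq_bigr => j jp; rewrite nbr_other.
by rewrite nbrE eqxx xy_p; case: p.2; rewrite /= opprD addrA !subrr.
Qed.

Lemma exists_nbr_closer x y (L : 'I_n) : x != y -> x L = y L ->
  exists2 p, p.1 != L & (dist (nbr x p) y).+1 = dist x y.
Proof.
move=> /eqP x_neq_y xy_L.
have [i xy_i] : exists i, x i != y i.
  by apply/existsP; apply: contra_notT x_neq_y => /existsPn eq_xy;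
     apply/ffunP => i; apply/eqP/negPn.
exists (i, x i < y i); first by apply: contraNneq xy_i => /= ->; rewrite xy_L.
rewrite /dist (bigD1 i) //= [in RHS](bigD1 i) //=.
rewrite -addSn; congr (_ + _)%N; last by apply: eq_bigr => j ji; rewrite nbr_other.
by rewrite nbrE eqxx /=; case: ltP => xy_lt; lia.
Qed.

End Grid.

Section CompletelyRegular.

Variables (n : nat) (C : vtx n -> Prop) (alpha : nat -> nat -> nat).
Hypothesis C_crc : is_CRC C alpha.

Lemma dist_to_code v : C v -> dist_to C v 0.
Proof. by move=> Cv; split => //; exists v => //; rewrite distxx. Qed.

Lemma dist_to_one v c : ~ C v -> C c -> dist v c = 1%N -> dist_to C v 1.
Proof.
move=> Cv' Cc vc; split; first by exists c.
by move=> c' Cc'; rewrite lt0n; apply/eqP => /dist_eq0 v_c'; rewrite v_c' in Cv'.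
Qed.

Lemma nbr_unique i j v p q : alpha i j = 1%N -> dist_to C v i ->
  dist_to C (nbr v p) j -> dist_to C (nbr v q) j -> nbr v p = nbr v q.
Proof.
move=> a_ij vi pj qj; apply/eqP; apply: contraT => p_neq_q.
have pq : p != q by apply: contraNneq p_neq_q => ->.
have : (#|[set p; q]| <= 1)%N.
  rewrite -a_ij -(C_crc.1 i j v vi); apply: subset_leq_card; apply/subsetP => r.
  by rewrite !inE => /orP[] /eqP ->; apply/asboolP.
by rewrite cards2 pq.
Qed.

Hypotheses (a00 : alpha 0 0 = 1%N) (c1 : alpha 1 0 = 1%N) (a11 : alpha 1 1 = 1%N).

Lemma code_pair_dist_ge4 x y q : C x -> C (nbr x q) -> C y ->
  x q.1 = y q.1 -> x != y -> (4 <= dist x y)%N.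
Proof.
set L := q.1 => Cx Cxq Cy xy_L x_neq_y; rewrite leqNgt; apply/negP => xy_lt4.
have x0 := dist_to_code Cx.
have [p pL xy_p] := exists_nbr_closer x_neq_y xy_L.
set u := nbr x p in xy_p; have uL : u L = x L by rewrite nbr_other // eq_sym.
have ux : nbr u (p.1, ~~ p.2) = x by rewrite nbrK.
have Cu' : ~ C u.
  move=> Cu; have ux' : u = nbr x q := nbr_unique a00 x0 (dist_to_code Cu) (dist_to_code Cxq).
  by move: (nbr_moved x q); rewrite -/L -ux' uL eqxx.
have u1 : dist_to C u 1 by apply: (dist_to_one Cu' Cx); rewrite dist_sym dist_nbr.
have u_only (r : 'I_n * bool) : C (nbr u r) -> nbr u r = x.
  by move=> Cr; rewrite -[in RHS]ux; apply: nbr_unique c1 u1 _ _;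
     apply: dist_to_code; rewrite // ux.
have u_neq_y : u != y by apply/eqP => uy; apply: Cu'; rewrite uy.
have [r rL uy_r] := exists_nbr_closer u_neq_y (etrans uL xy_L).
set w := nbr u r in uy_r; have wL : w L = x L by rewrite nbr_other 1?eq_sym.
have Cw' : ~ C w.
  by move=> Cw; have wx : w = x := u_only r Cw; move: uy_r xy_p; rewrite wx; lia.
have w1 : dist_to C w 1.
  apply: (dist_to_one Cw' Cy); move: uy_r xy_p xy_lt4.
  case: (posnP (dist w y)) => [/dist_eq0 wy | ]; last by lia.
  have wx : w = x by apply: u_only; rewrite -/w wy.
  by rewrite -wx wy eqxx in x_neq_y.
set z := nbr u q; have zL : z L != x L by rewrite -uL nbr_moved.
have Cz' : ~ C z by move=> Cz; have zx : z = x := u_only q Cz; rewrite zx eqxx in zL.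
have z1 : dist_to C z 1.
  by apply: (dist_to_one Cz' Cxq); rewrite /z /u nbrC dist_sym dist_nbr.
have zw : z = w := nbr_unique a11 u1 z1 w1.
by rewrite zw wL eqxx in zL.
Qed.

End CompletelyRegular.

Theorem mainTheorem9 (n : nat) (C : vtx n -> Prop) (rho : nat)
    (alpha : nat -> nat -> nat) :
  (2 <= n)%N ->
  covering_radius C rho -> (1 <= rho)%N ->
  is_CRC C alpha ->
  (forall i : nat, (i <= rho)%N -> alpha i i = 1%N) ->   (* all-ones: a_i = 1 *)
  alpha 1%N 0%N = 1%N ->                                 (* c_1 = 1 *)
  C 0 -> C (- elast n) ->
  forall (s : int) (x y : vtx n),
    xlast x = 2 * s -> xlast y = 2 * s -> x != y ->
    C x -> C (x - elast n) -> C y -> C (y - elast n) ->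
    forall a b : vtx n, a \in [:: x; x - elast n] -> b \in [:: y; y - elast n] ->
      (4 <= dist a b)%N.
Proof.
case: n C => [|m] C // _ _ rho1 crc a_ones c1 _ _ s x y xs ys x_neq_y Cx Cx' Cy Cy' a b.
pose L := (@ord_max m, false).
have xlastE v : xlast v = v L.1 by rewrite /xlast (big_pred1 L.1).
have elastE v : v - elast m.+1 = nbr v L by apply/ffunP => j; rewrite !ffunE.
have xy_L : x L.1 = y L.1 by rewrite -!xlastE xs ys.
rewrite !elastE in Cx' Cy' *.
have xy4 : (4 <= dist x y)%N.
  by apply: (code_pair_dist_ge4 crc (a_ones 0 isT) c1 (a_ones 1 rho1) Cx Cx' Cy).
rewrite !inE => /orP[] /eqP -> /orP[] /eqP ->.
- exact: xy4.
- by rewrite dist_nbr_agree // ltnW.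
- by rewrite dist_sym dist_nbr_agree // dist_sym ltnW.
- by rewrite /nbr dist_addr.
Qed.
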